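(* Problem $(\overline{\mathrm{P}})$ is a restriction of problem (P). That is, whenever $(\mathbf{x}^0,\mathbf{x}^\uparrow,\mathbf{x}^\downarrow)$ together with some auxiliary variables is feasible for $(\overline{\mathrm{P}})$, there exist auxiliary variables with which $(\mathbf{x}^0,\mathbf{x}^\uparrow,\mathbf{x}^\downarrow)$ is feasible for (P). The two problems have the same objective.
   Context: Let $K$ be a positive integer, $\Delta t>0$, $T=K\Delta t$, $\mathcal{K}=\{1,\dots,K\}$, $0\le\underline y\le\bar y$, $\underline x\le0\le\bar x$, $\eta^{c},\eta^{d}\in(0,1)$, $\Delta\eta=1/\eta^{d}-\eta^{c}$, $y_0\ge0$ and $\gamma\in[0,T]$. Let $c$ and $\phi$ be real-valued cost functions. Problem (P) minimizes $c(\mathbf{x}^0,\mathbf{x}^\uparrow,\mathbf{x}^\downarrow)+\phi(\mathbf{x}^0,\mathbf{x}^\uparrow,\mathbf{x}^\downarrow,y_0)$. Its variables are $\mathbf{x}^0\in\mathbb{R}^K$; $\mathbf{x}^\uparrow,\mathbf{x}^\downarrow\in\mathbb{R}^K_+$; $\boldsymbol\alpha,\boldsymbol\beta\in\mathbb{R}^K$; $\underline{\boldsymbol\lambda},\bar{\boldsymbol\lambda}\in\mathbb{R}^K_+$; $\underline{\boldsymbol\Lambda}_k\in\mathbb{R}^k_+$ and $\bar{\boldsymbol\Lambda}_k\in\mathbb{R}^k$ for $k\in\mathcal{K}$; and $\upsilon_{1k},\upsilon_{2k}\in\{0,1\}$ for $k\le K-1$. Its constraints are: (a) $x^0_k+x^\uparrow_k\le\bar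 x$ and $x^0_k-x^\downarrow_k\ge\underline x$; (b) $y_0-\gamma\underline\lambda_k-\Delta t\sum_{l\le k}(\alpha_l+\underline\Lambda_{kl})\ge\underline y$; (c) $\alpha_k\ge\eta^{c}x^0_k$, $\alpha_k\ge x^0_k/\eta^{d}$, $\beta_k\ge\eta^{c}(x^0_k+x^\uparrow_k)$ and $\beta_k\ge(x^0_k+x^\uparrow_k)/\eta^{d}$; (d) $\underline\Lambda_{kl}+\underline\lambda_k+\alpha_l-\beta_l\ge0$ for $l\le k$; (e) $y_0+\gamma\bar\lambda_k+\Delta t\sum_{l\le k}\bar\Lambda_{kl}\le\bar y$; (f) $\bar\Lambda_{kk}\ge-\eta^{c}x^0_k$, $\bar\Lambda_{kk}\ge\eta^{c}(x^\downarrow_k-x^0_k)-\bar\lambda_k$ and $\bar\Lambda_{kk}\ge0$; (g) for $k\le K-1$: $(1-\upsilon_{1k})\underline x\le x^0_k-x^\downarrow_k\le\upsilon_{1k}\bar x$ and $\upsilon_{2k}\underline x\le x^0_k\le(1-\upsilon_{2k})\bar x$; (h) for $l<k$: - $\bar\Lambda_{kl}\ge\frac{x^\downarrow_l-x^0_l}{\eta^{d}}-\bar\lambda_k+(1-\upsilon_{1l})\Delta\eta\,\underline x$, - $\bar\Lambda_{kl}\ge-\frac{x^0_l}{\eta^{d}}+\upsilon_{2l}\Delta\eta\,\underline x$, - $\bar\Lambda_{kl}\ge\eta^{c}(x^\downarrow_l-x^0_l)-\bar\lambda_k-\upsilon_{1l}\Delta\eta\,\bar x$, - $\bar\Lambda_{kl}\ge-\eta^{c}x^0_l-(1-\upsilon_{2l})\Delta\eta\,\bar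 x$; (i) for $l<k$: $\bar\Lambda_{kl}x^\downarrow_l+\bar\lambda_kx^0_l\ge\upsilon_{2l}\frac{\underline x(\bar x-\underline x)}{\eta^{d}}-\upsilon_{1l}\frac{\bar x^2}{4\eta^{d}}$. All unqualified indices range over $\mathcal{K}$. Problem $(\overline{\mathrm{P}})$ has the same objective and variables as (P), plus additional binaries $\upsilon_{3k}\in\{0,1\}$ for $k\le K-1$. Its constraints are (a)–(h), without (i), together with: - for $k\le K-1$: $x^\downarrow_k-(1-\eta^{c}\eta^{d})x^0_k-\eta^{d}\bar\lambda_k\ge-((2-\eta^{c}\eta^{d})\bar x-\underline x)(1-\upsilon_{3k})$; - for $k\le K-1$: $x^\downarrow_k-(1-\eta^{c}\eta^{d})x^0_k-\eta^{d}\bar\lambda_k\le\upsilon_{3k}(\eta^{c}\eta^{d}\bar x-\underline x)$; - for $l<k$: $\bar\Lambda_{kl}\ge-\eta^{c}x^0_l-(\upsilon_{1l}+1-\upsilon_{3l})\Delta\eta\,\bar x$; - for $l<k$: $\bar\Lambda_{kl}\ge\frac{x^\downarrow_l-x^0_l}{\eta^{d}}-\bar\lambda_k+(\upsilon_{2l}+\upsilon_{3l})\Delta\eta\,\underline x$. *)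

(* Vectors in R^K are encoded as
   functions nat -> R indexed by 1..K (values outside are irrelevant);
   Lambda_k in R^k is encoded as Lam k l for 1 <= l <= k;
   binaries upsilon in {0,1} are booleans, injected into R by %:R. *)
From mathcomp Require Import all_boot all_order all_algebra.
Set Implicit Arguments. Unset Strict Implicit. Unset Printing Implicit Defensive.
Import Order.TTheory GRing.Theory Num.Theory.
Local Open Scope ring_scope.

Section Defs.
Variable R : realFieldType.

Definition deta (etac etad : R) : R := 1 / etad - etac.

Definition common_constraints (K : nat) (dt ylo yhi xlo xhi etac etad y0 gamma : R)
  (x0 xu xd alpha beta laml lamu : nat -> R) (Laml Lamu : nat -> nat -> R)
  (u1 u2 : nat -> bool) : Prop :=
  (forall k, (1 <= k <= K)%N ->
     0 <= xu k /\ 0 <= xd k /\ 0 <= laml k /\ 0 <= lamu k) /\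
  (forall k l, (1 <= l <= k)%N -> (k <= K)%N -> 0 <= Laml k l) /\
  (* (a) *)
  (forall k, (1 <= k <= K)%N -> x0 k + xu k <= xhi /\ x0 k - xd k >= xlo) /\
  (* (b) *)
  (forall k, (1 <= k <= K)%N ->
     y0 - gamma * laml k - dt * (\sum_(1 <= l < k.+1) (alpha l + Laml k l)) >= ylo) /\
  (* (c) *)
  (forall k, (1 <= k <= K)%N ->
     alpha k >= etac * x0 k /\ alpha k >= x0 k / etad /\
     beta k >= etac * (x0 k + xu k) /\ beta k >= (x0 k + xu k) / etad) /\
  (* (d) *)
  (forall k l, (1 <= l <= k)%N -> (k <= K)%N ->
     Laml k l + laml k + alpha l - beta l >= 0) /\
  (* (e) *)
  (forall k, (1 <= k <= K)%N ->
     y0 + gamma * lamu k + dt * (\sum_(1 <= l < k.+1) Lamu k l) <= yhi) /\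
  (* (f) *)
  (forall k, (1 <= k <= K)%N ->
     Lamu k k >= - (etac * x0 k) /\
     Lamu k k >= etac * (xd k - x0 k) - lamu k /\
     Lamu k k >= 0) /\
  (* (g) *)
  (forall k, (1 <= k <= K - 1)%N ->
     (1 - (u1 k)%:R) * xlo <= x0 k - xd k /\ x0 k - xd k <= (u1 k)%:R * xhi /\
     (u2 k)%:R * xlo <= x0 k /\ x0 k <= (1 - (u2 k)%:R) * xhi) /\
  (* (h) *)
  (forall k l, (1 <= l)%N -> (l < k)%N -> (k <= K)%N ->
     Lamu k l >= (xd l - x0 l) / etad - lamu k + (1 - (u1 l)%:R) * deta etac etad * xlo /\
     Lamu k l >= - (x0 l / etad) + (u2 l)%:R * deta etac etad * xlo /\
     Lamu k l >= etac * (xd l - x0 l) - lamu k - (u1 l)%:R * deta etac etad * xhi /\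
     Lamu k l >= - (etac * x0 l) - (1 - (u2 l)%:R) * deta etac etad * xhi).

Definition feasP (K : nat) (dt ylo yhi xlo xhi etac etad y0 gamma : R)
  (x0 xu xd alpha beta laml lamu : nat -> R) (Laml Lamu : nat -> nat -> R)
  (u1 u2 : nat -> bool) : Prop :=
  common_constraints K dt ylo yhi xlo xhi etac etad y0 gamma
    x0 xu xd alpha beta laml lamu Laml Lamu u1 u2 /\
  (* (i) *)
  (forall k l, (1 <= l)%N -> (l < k)%N -> (k <= K)%N ->
     Lamu k l * xd l + lamu k * x0 l >=
       (u2 l)%:R * (xlo * (xhi - xlo) / etad) - (u1 l)%:R * (xhi ^+ 2 / (4 * etad))).

Definition feasPbar (K : nat) (dt ylo yhi xlo xhi etac etad y0 gamma : R)
  (x0 xu xd alpha beta laml lamu : nat -> R) (Laml Lamu : nat -> nat -> R)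
  (u1 u2 u3 : nat -> bool) : Prop :=
  common_constraints K dt ylo yhi xlo xhi etac etad y0 gamma
    x0 xu xd alpha beta laml lamu Laml Lamu u1 u2 /\
  (forall k, (1 <= k <= K - 1)%N ->
     xd k - (1 - etac * etad) * x0 k - etad * lamu k >=
       - (((2 - etac * etad) * xhi - xlo) * (1 - (u3 k)%:R)) /\
     xd k - (1 - etac * etad) * x0 k - etad * lamu k <=
       (u3 k)%:R * (etac * etad * xhi - xlo)) /\
  (forall k l, (1 <= l)%N -> (l < k)%N -> (k <= K)%N ->
     Lamu k l >= - (etac * x0 l) - ((u1 l)%:R + 1 - (u3 l)%:R) * deta etac etad * xhi /\
     Lamu k l >= (xd l - x0 l) / etad - lamu k + ((u2 l)%:R + (u3 l)%:R) * deta etac etad * xlo).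

Definition objective (c : (nat -> R) -> (nat -> R) -> (nat -> R) -> R)
  (phi : (nat -> R) -> (nat -> R) -> (nat -> R) -> R -> R)
  (x0 xu xd : nat -> R) (y0 : R) : R := c x0 xu xd + phi x0 xu xd y0.

End Defs.

(* Keep every auxiliary variable of a feasible point of (Pbar) except lambda-bar,
   which is capped at (xhi - xlo) / eta^d.  Constraints (g) and (h) force
   Lambda-bar_kl >= - xhi / eta^d, so every lower bound on Lambda-bar in which
   lambda-bar enters with a minus sign still holds at the cap, and the cap only
   loosens (e).
   Constraint (i) is then checked pair by pair, with a = x0_l, d = xdown_l and
   L = Lambda-bar_kl.  If upsilon2 = 1 then xlo <= a <= 0 and L >= 0, and the cap
   bounds lambda-bar * a from below.  Otherwise a >= 0 and two of the lower bounds
   on L read L >= - k a and L >= k (d - a) - lambda-bar, with k = 1 / eta^d, or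
   k = eta^c when upsilon1 = 0 and upsilon3 = 1.  These give
   L d + lambda-bar a >= min(0, k d (d - a)), which is >= 0 when upsilon1 = 0
   (then a <= d) and >= - k xhi^2 / 4 in any case. *)

From mathcomp Require Import all_boot all_order all_algebra.
From mathcomp Require Import zify lra.
Set Implicit Arguments. Unset Strict Implicit. Unset Printing Implicit Defensive.
Import Order.TTheory GRing.Theory Num.Theory.
Local Open Scope ring_scope.

Section MixedTerm.
Variable R : realFieldType.
Implicit Types k a b d lam L m lo : R.

Lemma mixed_term_ge_min k a d lam L :
  0 < k -> 0 <= a -> 0 <= d -> 0 <= lam ->
  - (k * a) <= L -> k * (d - a) - lam <= L ->
  Num.min 0 (k * d * (d - a)) <= L * d + lam * a.
Proof.
move=> k_gt0 a_ge0 d_ge0 lam_ge0 La Lda; rewrite ge_min; apply/orP.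
have [kd_le_lam | lam_lt_kd] := lerP (k * d) lam.
  have : 0 <= (L + k * a) * d by apply: mulr_ge0; lra.
  have : 0 <= (lam - k * d) * a by apply: mulr_ge0; lra.
  by left; lra.
have : 0 <= (L - k * (d - a) + lam) * d by apply: mulr_ge0; lra.
have [a_le_d | d_lt_a] := lerP a d.
  have : 0 <= (k * d - lam) * (d - a) by apply: mulr_ge0; lra.
  by left; lra.
have : 0 <= lam * (a - d) by apply: mulr_ge0; lra.
by right; lra.
Qed.

Lemma mixed_term_ge0 k a d lam L :
  0 < k -> 0 <= a <= d -> 0 <= lam ->
  - (k * a) <= L -> k * (d - a) - lam <= L -> 0 <= L * d + lam * a.
Proof.
move=> k_gt0 /andP[a_ge0 a_le_d] lam_ge0 La Lda.
have d_ge0 : 0 <= d by lra.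
apply: (le_trans _ (mixed_term_ge_min k_gt0 a_ge0 d_ge0 lam_ge0 La Lda)).
rewrite le_min lexx /=; apply: mulr_ge0; first apply: mulr_ge0; lra.
Qed.

Lemma mixed_term_ge_sqr k a b d lam L :
  0 < k -> 0 <= a <= b -> 0 <= d -> 0 <= lam ->
  - (k * a) <= L -> k * (d - a) - lam <= L -> - (k * b ^+ 2 / 4) <= L * d + lam * a.
Proof.
move=> k_gt0 /andP[a_ge0 a_le_b] d_ge0 lam_ge0 La Lda.
apply: (le_trans _ (mixed_term_ge_min k_gt0 a_ge0 d_ge0 lam_ge0 La Lda)).
have sqr_a_le : a ^+ 2 <= b ^+ 2 by rewrite ler_sqr ?nnegrE; lra.
rewrite le_min; apply/andP; split.
  by rewrite oppr_le0; apply: divr_ge0; [apply: mulr_ge0; rewrite ?sqr_ge0; lra | lra].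
(* k d (d - a) = k (d - a/2)^2 - k a^2 / 4 *)
have : 0 <= k * (d - a / 2) ^+ 2 by apply: mulr_ge0; rewrite ?sqr_ge0; lra.
have : k * a ^+ 2 <= k * b ^+ 2 by rewrite ler_pM2l.
lra.
Qed.

Lemma mixed_term_ge_mul m lo a d lam L :
  0 <= L -> 0 <= d -> 0 <= lam <= m -> lo <= a <= 0 -> lo * m <= L * d + lam * a.
Proof.
move=> L_ge0 d_ge0 /andP[lam_ge0 lam_le_m] /andP[lo_le_a a_le0].
have : 0 <= L * d by apply: mulr_ge0.
have : 0 <= (m - lam) * - a by apply: mulr_ge0; lra.
have : 0 <= m * (a - lo) by apply: mulr_ge0; lra.
lra.
Qed.

End MixedTerm.

Section PairConstraints.
Variables (R : realFieldType) (etac etad xlo xhi : R).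
Implicit Types (a d lam L t : R).

Definition constr_g a d (u1 u2 : bool) : Prop :=
  (1 - u1%:R) * xlo <= a - d /\ a - d <= u1%:R * xhi /\
  u2%:R * xlo <= a /\ a <= (1 - u2%:R) * xhi.

Definition constr_h a d lam L (u1 u2 : bool) : Prop :=
  L >= (d - a) / etad - lam + (1 - u1%:R) * deta etac etad * xlo /\
  L >= - (a / etad) + u2%:R * deta etac etad * xlo /\
  L >= etac * (d - a) - lam - u1%:R * deta etac etad * xhi /\
  L >= - (etac * a) - (1 - u2%:R) * deta etac etad * xhi.

Definition constr_hbar a d lam L (u1 u2 u3 : bool) : Prop :=
  L >= - (etac * a) - (u1%:R + 1 - u3%:R) * deta etac etad * xhi /\
  L >= (d - a) / etad - lam + (u2%:R + u3%:R) * deta etac etad * xlo.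

Definition constr_i a d lam L (u1 u2 : bool) : Prop :=
  L * d + lam * a >=
    u2%:R * (xlo * (xhi - xlo) / etad) - u1%:R * (xhi ^+ 2 / (4 * etad)).

Definition lam_cap lam := Num.min lam ((xhi - xlo) / etad).

Lemma detaE : deta etac etad = etad^-1 - etac.
Proof. by rewrite /deta div1r. Qed.

Lemma etac_lt_inv_etad : etac < 1 -> 0 < etad < 1 -> etac < etad^-1.
Proof.
move=> etac_lt1 /andP[etad_gt0 etad_lt1].
by apply: lt_trans etac_lt1 _; rewrite invf_gt1.
Qed.

Lemma lam_cap_ge0 lam : 0 < etad -> xlo <= xhi -> 0 <= lam -> 0 <= lam_cap lam.
Proof.
move=> etad_gt0 xlo_le_xhi lam_ge0; rewrite le_min lam_ge0 /=.
by apply: divr_ge0; [rewrite subr_ge0 | exact: ltW].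
Qed.

Lemma lam_cap_le lam : lam_cap lam <= lam.
Proof. by rewrite ge_min lexx. Qed.

Lemma sub_lam_cap_le t lam L :
  t <= - (xlo / etad) -> - (xhi / etad) <= L -> t - lam <= L -> t - lam_cap lam <= L.
Proof.
move=> t_le L_ge; rewrite /lam_cap minEle; case: ifP => // _ _.
by rewrite mulrBl; lra.
Qed.

Lemma constr_h_lower a d lam L (u1 u2 : bool) :
  0 < etac -> 0 < etad -> 0 <= xhi ->
  constr_g a d u1 u2 -> constr_h a d lam L u1 u2 -> - (xhi / etad) <= L.
Proof.
move=> etac_gt0 etad_gt0 xhi_ge0 [_ [_ [a_lo a_hi]]] [_ [h2 [_ h4]]].
have : 0 <= xhi / etad by apply: divr_ge0; last exact: ltW.
case: u2 a_lo a_hi h2 h4 => /= a_lo a_hi h2 h4; first nra.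
have : a / etad <= xhi / etad by rewrite ler_pM2r ?invr_gt0 //; lra.
lra.
Qed.

Lemma gap_div_le a d : 0 < etad -> xlo <= a - d -> (d - a) / etad <= - (xlo / etad).
Proof. by move=> etad_gt0 gap_ge; rewrite -mulNr ler_pM2r ?invr_gt0 //; lra. Qed.

Lemma etac_gap_le a d :
  0 < etac -> etac < etad^-1 -> xlo <= 0 -> xlo <= a - d -> etac * (d - a) <= - (xlo / etad).
Proof.
move=> etac_gt0 etac_lt xlo_le0 gap_ge.
have : 0 <= etac * - xlo by apply: mulr_ge0; lra.
have : 0 <= (etad^-1 - etac) * - xlo by apply: mulr_ge0; lra.
have [gap_le0 | gap_gt0] := lerP (d - a) 0.
  have : etac * (d - a) <= 0 by rewrite pmulr_rle0.
  lra.
have : etac * (d - a) <= etac * - xlo by rewrite ler_pM2l //; lra.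
lra.
Qed.

Lemma constr_h_capped a d lam L u1 u2 :
  0 < etac -> etac < etad^-1 -> 0 < etad -> xlo <= 0 -> 0 <= xhi ->
  xlo <= a - d -> - (xhi / etad) <= L -> constr_h a d lam L u1 u2 ->
  constr_h a d (lam_cap lam) L u1 u2.
Proof.
move=> etac_gt0 etac_lt etad_gt0 xlo_le0 xhi_ge0 gap_ge L_ge h.
have div_gap := gap_div_le etad_gt0 gap_ge.
have etac_gap := etac_gap_le etac_gt0 etac_lt xlo_le0 gap_ge.
have deta_ge0 : 0 <= deta etac etad by rewrite detaE; lra.
have deta_xlo : deta etac etad * xlo <= 0 by rewrite mulr_ge0_le0.
have deta_xhi : 0 <= deta etac etad * xhi by rewrite mulr_ge0.
case: h => h1 [h2 [h3 h4]].
split; last split => //; last split => //.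
- suff : (d - a) / etad + (1 - u1%:R) * deta etac etad * xlo - lam_cap lam <= L by lra.
  apply: sub_lam_cap_le => //; last lra.
  by case: (u1) => /=; lra.
- suff : etac * (d - a) - u1%:R * deta etac etad * xhi - lam_cap lam <= L by lra.
  apply: sub_lam_cap_le => //; last lra.
  by case: (u1) => /=; lra.
Qed.

Lemma constr_hbar_capped a d lam L u1 u2 u3 :
  etac < etad^-1 -> 0 < etad -> xlo <= 0 ->
  xlo <= a - d -> - (xhi / etad) <= L -> constr_hbar a d lam L u1 u2 u3 ->
  constr_hbar a d (lam_cap lam) L u1 u2 u3.
Proof.
move=> etac_lt etad_gt0 xlo_le0 gap_ge L_ge [hb1 hb2]; split => //.
have div_gap := gap_div_le etad_gt0 gap_ge.
have deta_ge0 : 0 <= deta etac etad by rewrite detaE; lra.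
have deta_xlo : deta etac etad * xlo <= 0 by rewrite mulr_ge0_le0.
suff : (d - a) / etad + (u2%:R + u3%:R) * deta etac etad * xlo - lam_cap lam <= L by lra.
apply: sub_lam_cap_le => //; last lra.
by case: (u2); case: (u3) => /=; lra.
Qed.

Lemma constr_i_of_bounded a d lam L u1 u2 u3 :
  0 < etac -> 0 < etad -> 0 <= d -> 0 <= lam <= (xhi - xlo) / etad ->
  constr_g a d u1 u2 -> constr_h a d lam L u1 u2 -> constr_hbar a d lam L u1 u2 u3 ->
  constr_i a d lam L u1 u2.
Proof.
move=> etac_gt0 etad_gt0 d_ge0 lam_bd [g1 [g2 [g3 g4]]] [h1 [h2 [h3 h4]]] [hb1 hb2].
have lam_ge0 : 0 <= lam by case/andP: lam_bd.
have inv_etad_gt0 : 0 < etad^-1 by rewrite invr_gt0.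
have sqr_term_ge0 : 0 <= xhi ^+ 2 / (4 * etad).
  by apply: divr_ge0; [exact: sqr_ge0 | apply: mulr_ge0; [| exact: ltW]].
rewrite /constr_i; case: u2 g3 g4 h2 h4 hb2 => /= g3 g4 h2 h4 hb2.
  have etac_a_ge0 : 0 <= etac * - a by apply: mulr_ge0; lra.
  have L_ge0 : 0 <= L by lra.
  have a_bd : xlo <= a <= 0 by apply/andP; split; lra.
  have := mixed_term_ge_mul L_ge0 d_ge0 lam_bd a_bd.
  by case: (u1) => /=; lra.
have a_ge0 : 0 <= a by lra.
case: u1 g1 g2 h1 h3 hb1 => /= g1 g2 h1 h3 hb1.
  have a_bd : 0 <= a <= xhi by apply/andP; split; lra.
  have := mixed_term_ge_sqr (L := L) inv_etad_gt0 a_bd d_ge0 lam_ge0 ltac:(lra) ltac:(lra).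
  by rewrite invfM; lra.
have a_bd : 0 <= a <= d by apply/andP; split; lra.
case: u3 hb1 hb2 => /= hb1 hb2.
  by have := mixed_term_ge0 (L := L) etac_gt0 a_bd lam_ge0 ltac:(lra) ltac:(lra); lra.
by have := mixed_term_ge0 (L := L) inv_etad_gt0 a_bd lam_ge0 ltac:(lra) ltac:(lra); lra.
Qed.

End PairConstraints.

Lemma pair_indices (K k l : nat) : (1 <= l)%N -> (l < k)%N -> (k <= K)%N ->
  [/\ (1 <= l <= K)%N, (1 <= l <= K - 1)%N & (1 <= k <= K)%N].
Proof. by move=> l_ge1 l_lt_k k_le_K; split; apply/andP; split; lia. Qed.

Section Feasibility.
Variables (R : realFieldType) (K : nat) (dt ylo yhi xlo xhi etac etad y0 gamma : R).
Variables (x0 xu xd alpha beta laml lamu : nat -> R) (Laml Lamu : nat -> nat -> R).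
Variables (u1 u2 u3 : nat -> bool).
Hypotheses (etac_gt0 : 0 < etac) (etac_lt : etac < etad^-1) (etad_gt0 : 0 < etad).
Hypotheses (xlo_le0 : xlo <= 0) (xhi_ge0 : 0 <= xhi) (gamma_ge0 : 0 <= gamma).

Local Notation lamu_capped := (fun k => lam_cap etad xlo xhi (lamu k)).

Lemma common_constraints_capped :
  common_constraints K dt ylo yhi xlo xhi etac etad y0 gamma
    x0 xu xd alpha beta laml lamu Laml Lamu u1 u2 ->
  common_constraints K dt ylo yhi xlo xhi etac etad y0 gamma
    x0 xu xd alpha beta laml lamu_capped Laml Lamu u1 u2.
Proof.
case=> dom [Ldom [Ha [Hb [Hc [Hd [He [Hf [Hg Hh]]]]]]]].
have xhi_div_ge0 : 0 <= xhi / etad by apply: divr_ge0; last exact: ltW.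
split.
  move=> k /dom [xu_ge0 [xd_ge0 [laml_ge0 lamu_ge0]]]; do !split => //.
  exact: lam_cap_ge0 (le_trans xlo_le0 xhi_ge0) lamu_ge0.
do 5 (split; first by []).
split.
  move=> k /He; apply: le_trans.
  by rewrite lerD2r lerD2l ler_wpM2l // lam_cap_le.
split.
  move=> k k_bd; have [f1 [f2 f3]] := Hf k k_bd; do !split => //.
  apply: sub_lam_cap_le f2; first exact: etac_gap_le (Ha k k_bd).2.
  by apply: le_trans f3; rewrite oppr_le0.
split; first by [].
move=> k l l_ge1 l_lt_k k_le_K; have [l_bd l_bd' _] := pair_indices l_ge1 l_lt_k k_le_K.
have h := Hh k l l_ge1 l_lt_k k_le_K.
have L_ge := constr_h_lower etac_gt0 etad_gt0 xhi_ge0 (Hg l l_bd') h.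
exact: constr_h_capped etac_gt0 etac_lt etad_gt0 xlo_le0 xhi_ge0 (Ha l l_bd).2 L_ge h.
Qed.

Lemma feasPbar_feasP :
  feasPbar K dt ylo yhi xlo xhi etac etad y0 gamma
    x0 xu xd alpha beta laml lamu Laml Lamu u1 u2 u3 ->
  feasP K dt ylo yhi xlo xhi etac etad y0 gamma
    x0 xu xd alpha beta laml lamu_capped Laml Lamu u1 u2.
Proof.
case=> com [_ Hbar]; split; first exact: common_constraints_capped.
case: com => dom [_ [Ha [_ [_ [_ [_ [_ [Hg Hh]]]]]]]].
move=> k l l_ge1 l_lt_k k_le_K; have [l_bd l_bd' k_bd] := pair_indices l_ge1 l_lt_k k_le_K.
have h := Hh k l l_ge1 l_lt_k k_le_K; have hb := Hbar k l l_ge1 l_lt_k k_le_K.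
have L_ge := constr_h_lower etac_gt0 etad_gt0 xhi_ge0 (Hg l l_bd') h.
have [_ [xd_ge0 _]] := dom l l_bd; have [_ [_ [_ lamu_ge0]]] := dom k k_bd.
have lam_bd : 0 <= lam_cap etad xlo xhi (lamu k) <= (xhi - xlo) / etad.
  by rewrite lam_cap_ge0 ?(le_trans xlo_le0 xhi_ge0) //= ge_min lexx orbT.
apply: constr_i_of_bounded etac_gt0 etad_gt0 xd_ge0 lam_bd (Hg l l_bd') _ _.
  exact: constr_h_capped etac_gt0 etac_lt etad_gt0 xlo_le0 xhi_ge0 (Ha l l_bd).2 L_ge h.
exact: constr_hbar_capped etac_lt etad_gt0 xlo_le0 (Ha l l_bd).2 L_ge hb.
Qed.

End Feasibility.

Theorem proposition9 (R : realFieldType) (K : nat) (dt T ylo yhi xlo xhi etac etad y0 gamma : R)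
  (c : (nat -> R) -> (nat -> R) -> (nat -> R) -> R)
  (phi : (nat -> R) -> (nat -> R) -> (nat -> R) -> R -> R) :
  (0 < K)%N -> 0 < dt -> T = K%:R * dt ->
  0 <= ylo -> ylo <= yhi -> xlo <= 0 -> 0 <= xhi ->
  0 < etac < 1 -> 0 < etad < 1 -> 0 <= y0 -> 0 <= gamma <= T ->
  forall x0 xu xd : nat -> R,
  (exists (alpha beta laml lamu : nat -> R) (Laml Lamu : nat -> nat -> R)
          (u1 u2 u3 : nat -> bool),
     feasPbar K dt ylo yhi xlo xhi etac etad y0 gamma
       x0 xu xd alpha beta laml lamu Laml Lamu u1 u2 u3) ->
  exists (alpha beta laml lamu : nat -> R) (Laml Lamu : nat -> nat -> R)
         (u1 u2 : nat -> bool),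
    feasP K dt ylo yhi xlo xhi etac etad y0 gamma
      x0 xu xd alpha beta laml lamu Laml Lamu u1 u2 /\
    objective c phi x0 xu xd y0 = objective c phi x0 xu xd y0.
Proof.
move=> _ _ _ _ _ xlo_le0 xhi_ge0 /andP[etac_gt0 etac_lt1] etad_bd _ /andP[gamma_ge0 _]
  x0 xu xd [alpha [beta [laml [lamu [Laml [Lamu [u1 [u2 [u3 feas]]]]]]]]].
have etad_gt0 : 0 < etad by case/andP: etad_bd.
have etac_lt := etac_lt_inv_etad etac_lt1 etad_bd.
exists alpha, beta, laml, (fun k => lam_cap etad xlo xhi (lamu k)), Laml, Lamu, u1, u2.
split => //.
exact: feasPbar_feasP etac_gt0 etac_lt etad_gt0 xlo_le0 xhi_ge0 gamma_ge0 feas.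
Qed.
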